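(* There is no countable graph $U$ such that $U$ has no $K_\infty$ minor and every countable graph with no $K_\infty$ minor is a minor of $U$.
   Context: Graphs may be infinite. $K_\infty$ denotes the complete graph on countably infinitely many vertices. A graph $H$ is a minor of a graph $G$ (written $H<G$) if there are pairwise disjoint connected subgraphs $B_v\subseteq G$, $v\in V(H)$ (branch sets), and for every edge $uv\in E(H)$ an edge of $G$ with one endvertex in $B_u$ and the other in $B_v$. A graph is $K_\infty$-minor-free if $K_\infty$ is not a minor of it. *)

From Stdlib Require Import Relations Relation_Operators.

Record graph := Graph {
  vertex : Type;
  adj : vertex -> vertex -> Prop;
  adj_sym : forall x y, adj x y -> adj y x;
  adj_irrefl : forall x, ~ adj x x
}.

(* countable = finite or countably infinite: injects into nat *)
Definition countable (G : graph) : Prop :=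
  exists f : vertex G -> nat, forall x y, f x = f y -> x = y.

(* adjacency restricted to a vertex set B (the induced subgraph G[B]) *)
Definition adj_in (G : graph) (B : vertex G -> Prop) : vertex G -> vertex G -> Prop :=
  fun x y => B x /\ B y /\ adj G x y.

Definition connected_set (G : graph) (B : vertex G -> Prop) : Prop :=
  (exists x, B x) /\
  forall x y, B x -> B y -> clos_refl_trans (vertex G) (adj_in G B) x y.

Definition minor (H G : graph) : Prop :=
  exists B : vertex H -> vertex G -> Prop,
    (forall v, connected_set G (B v)) /\
    (forall u v x, u <> v -> B u x -> B v x -> False) /\
    (forall u v, adj H u v -> exists x y, B u x /\ B v y /\ adj G x y).

Lemma Kinf_sym : forall x y : nat, x <> y -> y <> x.
Proof. intros x y H E; apply H; symmetry; exact E. Qed.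
Lemma Kinf_irrefl : forall x : nat, ~ (x <> x).
Proof. intros x H; apply H; reflexivity. Qed.
Definition K_inf : graph := Graph nat (fun x y => x <> y) Kinf_sym Kinf_irrefl.

Definition Kinf_minor_free (G : graph) : Prop := ~ minor K_inf G.

From Stdlib Require Import List Arith Lia Relations Relation_Operators Classical ClassicalEpsilon.
From Stdlib Require Cantor.
Import ListNotations.

(* Suppose U were universal. Build the countable graph T(U) = model_graph U
   whose vertices are towers: sequences of K_1-, K_2-, ..., K_n-models in U,
   each extending the previous one, two towers being adjacent when one extends
   the other. The minimal elements of the branch sets of a K_oo minor of T(U)
   are pairwise comparable towers of unbounded length, whose union is a K_oo
   model in U; so T(U) is K_oo-minor-free and hence a minor of U. A model of
   T(U) in U then turns every tower s into a longer one, realize s, whose i-th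
   branch set lives in the branch set of the i-th prefix of s; the prefixes of
   s are pairwise adjacent in T(U), which provides the required edges.
   Iterating from the empty tower gives a K_oo model in U, a contradiction. *)

Definition prefix {X} (s t : list X) : Prop := exists r, t = s ++ r.

Definition comparable {X} (s t : list X) : Prop := prefix s t \/ prefix t s.

Lemma prefix_refl {X} (s : list X) : prefix s s.
Proof. exists []. now rewrite app_nil_r. Qed.

Lemma prefix_trans {X} (a b c : list X) : prefix a b -> prefix b c -> prefix a c.
Proof. intros [r ->] [r' ->]. exists (r ++ r'). now rewrite app_assoc. Qed.

Lemma prefix_nil {X} (a : list X) : prefix [] a.
Proof. now exists a. Qed.

Lemma prefix_length {X} (a b : list X) : prefix a b -> length a <= length b.
Proof. intros [r ->]. rewrite length_app. lia. Qed.

Lemma prefix_firstn {X} (s : list X) k : prefix (firstn k s) s.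
Proof. exists (skipn k s). now rewrite firstn_skipn. Qed.

Lemma firstn_firstn_le {X} (s : list X) i j : i <= j -> firstn i (firstn j s) = firstn i s.
Proof. intros Hij. rewrite firstn_firstn. f_equal. lia. Qed.

Lemma prefix_comparable {X} (a b c : list X) : prefix a c -> prefix b c -> comparable a b.
Proof.
  intros [r ->] [r' E]. revert b E. induction a as [|x a IH]; intros b E.
  - left. apply prefix_nil.
  - destruct b as [|y b]; [right; apply prefix_nil|].
    simpl in E. injection E as -> E.
    destruct (IH b E) as [[t ->]|[t ->]]; [left|right]; now exists t.
Qed.

Lemma comparable_prefix_length {X} (a b : list X) :
  comparable a b -> length a <= length b -> prefix a b.
Proof.
  intros [Hab|[r ->]] Hlen; [exact Hab|].
  rewrite length_app in Hlen. destruct r; [|simpl in Hlen; lia].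
  rewrite app_nil_r. apply prefix_refl.
Qed.

Lemma comparable_length_eq {X} (a b : list X) :
  comparable a b -> length a = length b -> a = b.
Proof.
  intros Hab Hlen. destruct (comparable_prefix_length a b Hab) as [r ->]; [lia|].
  rewrite length_app in Hlen. destruct r; [now rewrite app_nil_r|simpl in Hlen; lia].
Qed.

Lemma ex_shortest {X} (P : list X -> Prop) :
  (exists x, P x) -> exists x, P x /\ forall y, P y -> length x <= length y.
Proof.
  intros [x Px]. remember (length x) as n eqn:Hn. revert x Px Hn.
  induction n as [n IH] using lt_wf_ind. intros x Px Hn.
  destruct (classic (exists y, P y /\ length y < length x)) as [[y [Py Hy]]|Hmin].
  - apply (IH (length y)) with y; auto. lia.
  - exists x. split; [exact Px|]. intros y Py.
    apply Nat.nlt_ge. intros Hy. apply Hmin. now exists y.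
Qed.

Lemma injective_unbounded (f : nat -> nat) :
  (forall i j, f i = f j -> i = j) -> forall k, exists n, k <= f n.
Proof.
  intros Hinj k. apply NNPP. intros Hbound.
  assert (Hnodup : NoDup (map f (seq 0 (S k)))).
  { apply NoDup_map_NoDup_ForallPairs; [intros i j _ _; apply Hinj|apply seq_NoDup]. }
  apply NoDup_incl_length with (l' := seq 0 k) in Hnodup.
  - rewrite length_map, !length_seq in Hnodup. lia.
  - intros y Hy. apply in_map_iff in Hy as [n [<- _]]. apply in_seq.
    split; [lia|]. apply Nat.nle_gt. intros Hn. apply Hbound. now exists n.
Qed.

Lemma rt_adj_in_mono (G : graph) (P Q : vertex G -> Prop) x y :
  (forall u, P u -> Q u) ->
  clos_refl_trans _ (adj_in G P) x y -> clos_refl_trans _ (adj_in G Q) x y.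
Proof.
  intros HPQ Hxy. induction Hxy as [x y [Px [Py Hxy]]| |]; eauto using rt_refl, rt_trans.
  apply rt_step. repeat split; auto.
Qed.

Lemma rt_adj_in_sym (G : graph) (P : vertex G -> Prop) x y :
  clos_refl_trans _ (adj_in G P) x y -> clos_refl_trans _ (adj_in G P) y x.
Proof.
  intros Hxy. induction Hxy as [x y [Px [Py Hxy]]| |]; eauto using rt_refl, rt_trans.
  apply rt_step. repeat split; auto. now apply adj_sym.
Qed.

Lemma rt_adj_in_finite (G : graph) (P : vertex G -> Prop) a b :
  clos_refl_trans _ (adj_in G P) a b -> P a ->
  exists l, (forall u, In u l -> P u) /\ In b l /\
    forall u, In u l -> clos_refl_trans _ (adj_in G (fun w => In w l)) a u.
Proof.
  intros Hab Pa. apply clos_rt_rtn1 in Hab.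
  induction Hab as [|y z [Py [Pz Hyz]] _ [l [HlP [Hy Hl]]]].
  - exists [a]. split; [|split]; [intros u [<-|[]]; auto|now left|].
    intros u [<-|[]]. apply rt_refl.
  - assert (Hl' : forall u, In u l -> clos_refl_trans _ (adj_in G (fun w => In w (z :: l))) a u).
    { intros u Hu. apply rt_adj_in_mono with (P := fun w => In w l); auto. intros; now right. }
    exists (z :: l). split; [|split]; [intros u [<-|Hu]; auto|now left|].
    intros u [<-|Hu]; [|now apply Hl'].
    apply rt_trans with y; [now apply Hl'|]. apply rt_step. repeat split; simpl; auto.
Qed.

Section Towers.
Variable U : graph.

(* The j-th stage of a node lists pairs (i, u) adding the vertex u to branch
   set i, so the models described by the prefixes of a node grow monotonically. *)
Definition node : Type := list (list (nat * vertex U)).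

Definition branch (i : nat) (q : node) (u : vertex U) : Prop :=
  exists st, In st q /\ In (i, u) st.

Record clique_model (q : node) : Prop := {
  model_nonempty : forall i, i < length q -> exists u, branch i q u;
  model_connected : forall i u v, i < length q -> branch i q u -> branch i q v ->
    clos_refl_trans _ (adj_in U (branch i q)) u v;
  model_disjoint : forall i j u, i < length q -> j < length q -> i <> j ->
    branch i q u -> branch j q u -> False;
  model_touch : forall i j, i < length q -> j < length q -> i <> j ->
    exists x y, branch i q x /\ branch j q y /\ adj U x y
}.

Definition tower (q : node) : Prop := forall p, prefix p q -> clique_model p.

Lemma branch_prefix i p q u : prefix p q -> branch i p u -> branch i q u.
Proof. intros [r ->] [st [Hst Hu]]. exists st. split; [apply in_or_app; now left|exact Hu]. Qed.

Lemma tower_prefix p q : prefix p q -> tower q -> tower p.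
Proof. intros Hpq Hq r Hrp. apply Hq. eapply prefix_trans; eauto. Qed.

Lemma tower_firstn k q : tower q -> tower (firstn k q).
Proof. apply tower_prefix, prefix_firstn. Qed.

Lemma tower_clique_model q : tower q -> clique_model q.
Proof. intros Hq. apply Hq, prefix_refl. Qed.

Lemma clique_model_nil : clique_model [].
Proof. split; intros; simpl in *; lia. Qed.

Lemma tower_nil : tower [].
Proof. intros p [r E]. destruct p; [apply clique_model_nil|discriminate]. Qed.

Lemma Kinf_minor_of_comparable_models (c : nat -> node) :
  (forall n, clique_model (c n)) ->
  (forall n m, comparable (c n) (c m)) ->
  (forall k, exists n, k <= length (c n)) ->
  minor K_inf U.
Proof.
  intros Hmodel Hcmp Hunb.
  assert (Hub : forall n m k, exists N,
             prefix (c n) (c N) /\ prefix (c m) (c N) /\ k <= length (c N)).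
  { intros n m k. destruct (Hunb (length (c n) + length (c m) + k)) as [N HN].
    exists N. split; [|split]; [..|lia]; apply comparable_prefix_length; auto; lia. }
  exists (fun i u => exists n, branch i (c n) u). split; [|split].
  - intros i. split.
    + destruct (Hunb (S i)) as [n Hn].
      destruct (model_nonempty _ (Hmodel n) i) as [u Hu]; [lia|]. now exists u, n.
    + intros x y [n Hx] [m Hy]. destruct (Hub n m (S i)) as [N [Hn [Hm HN]]].
      apply rt_adj_in_mono with (P := branch i (c N)); [intros w Hw; now exists N|].
      apply (model_connected _ (Hmodel N));
        [lia|apply (branch_prefix i (c n))|apply (branch_prefix i (c m))]; assumption.
  - intros u v x Huv [n Hx] [m Hy]. destruct (Hub n m (S (u + v))) as [N [Hn [Hm HN]]].
    apply (model_disjoint _ (Hmodel N) u v x);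
      [lia|lia|exact Huv|apply (branch_prefix u (c n))|apply (branch_prefix v (c m))]; assumption.
  - intros u v Huv. destruct (Hunb (S (u + v))) as [N HN].
    destruct (model_touch _ (Hmodel N) u v) as [x [y [Hx [Hy Hxy]]]]; [lia|lia|exact Huv|].
    exists x, y. split; [now exists N|split; [now exists N|exact Hxy]].
Qed.

Definition tower_adj (s t : node) : Prop := tower s /\ tower t /\ s <> t /\ comparable s t.

Lemma tower_adj_sym s t : tower_adj s t -> tower_adj t s.
Proof.
  intros [Hs [Ht [Hst Hcmp]]]. split; [exact Ht|split; [exact Hs|split]].
  - intros <-. now apply Hst.
  - destruct Hcmp; [right|left]; assumption.
Qed.

Lemma tower_adj_irrefl s : ~ tower_adj s s.
Proof. intros [_ [_ [Hss _]]]. now apply Hss. Qed.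

Definition model_graph : graph := Graph node tower_adj tower_adj_sym tower_adj_irrefl.

Lemma shortest_prefix_of_connected (C : node -> Prop) m x :
  connected_set model_graph C -> C m -> (forall y, C y -> length m <= length y) ->
  C x -> prefix m x.
Proof.
  intros [_ Hconn] Cm Hmin Cx. specialize (Hconn m x Cm Cx).
  apply clos_rt_rtn1 in Hconn.
  induction Hconn as [|y z [Cy [Cz [_ [_ [_ [Hyz|Hzy]]]]]] _ IH];
    [apply prefix_refl| |].
  - eapply prefix_trans; [apply IH|]; auto.
  - apply comparable_prefix_length; [|now apply Hmin].
    apply (prefix_comparable _ _ y); auto.
Qed.

Lemma model_graph_Kinf_free : ~ minor K_inf U -> Kinf_minor_free model_graph.
Proof.
  intros HU [C [Hconn [Hdisj Hedge]]].
  destruct (choice (fun i m => C i m /\ forall y, C i y -> length m <= length y))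
    as [m Hm]; [intros i; apply ex_shortest, (Hconn i)|].
  assert (Hpre : forall i x, C i x -> prefix (m i) x).
  { intros i x Hx. apply (shortest_prefix_of_connected (C i)); auto; apply Hm. }
  assert (Htower : forall i, tower (m i)).
  { intros i. destruct (Hedge i (S i)) as [x [_ [Hx [_ [Hxt _]]]]]; [apply n_Sn|].
    apply (tower_prefix (m i) x); auto. }
  assert (Hcmp : forall i j, comparable (m i) (m j)).
  { intros i j. destruct (Nat.eq_dec i j) as [<-|Hij]; [left; apply prefix_refl|].
    destruct (Hedge i j Hij) as [x [y [Hx [Hy [_ [_ [_ [Hxy|Hyx]]]]]]]].
    - apply (prefix_comparable _ _ y); [eapply prefix_trans|]; eauto.
    - apply (prefix_comparable _ _ x); [|eapply prefix_trans]; eauto. }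
  apply HU, (Kinf_minor_of_comparable_models m); auto using tower_clique_model.
  apply injective_unbounded. intros i j Hlen. apply NNPP. intros Hij.
  apply (Hdisj i j (m i) Hij (proj1 (Hm i))).
  rewrite (comparable_length_eq (m i) (m j)); auto. apply Hm.
Qed.

Fixpoint list_code {X} (e : X -> nat) (l : list X) : nat :=
  match l with [] => 0 | x :: l => S (Cantor.to_nat (e x, list_code e l)) end.

Lemma list_code_inj {X} (e : X -> nat) :
  (forall x y, e x = e y -> x = y) -> forall l l', list_code e l = list_code e l' -> l = l'.
Proof.
  intros He l. induction l as [|x l IH]; intros [|y l'] E; cbn [list_code] in E;
    try discriminate; auto.
  apply eq_add_S, (f_equal Cantor.of_nat) in E. rewrite !Cantor.cancel_of_to in E.
  injection E as Exy El. f_equal; auto.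
Qed.

Lemma model_graph_countable : countable U -> countable model_graph.
Proof.
  intros [f Hf].
  exists (list_code (list_code (fun p : nat * vertex U => Cantor.to_nat (fst p, f (snd p))))).
  apply list_code_inj, list_code_inj. intros [i x] [j y] E. cbn [fst snd] in E.
  apply (f_equal Cantor.of_nat) in E. rewrite !Cantor.cancel_of_to in E.
  injection E as -> E. f_equal; auto.
Qed.

End Towers.

Section Realize.
Variable U : graph.
Variable B : node U -> vertex U -> Prop.
Hypothesis B_connected : forall t, connected_set U (B t).
Hypothesis B_disjoint : forall t t' x, t <> t' -> B t x -> B t' x -> False.
Hypothesis B_touch : forall t t', tower_adj U t t' -> exists x y, B t x /\ B t' y /\ adj U x y.

Definition root (t : node U) : vertex U :=
  proj1_sig (constructive_indefinite_description _ (proj1 (B_connected t))).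

Lemma root_spec t : B t (root t).
Proof. exact (proj2_sig (constructive_indefinite_description _ _)). Qed.

Definition link (t t' : node U) : vertex U * vertex U :=
  epsilon (inhabits (root [], root []))
    (fun p => B t (fst p) /\ B t' (snd p) /\ adj U (fst p) (snd p)).

Lemma link_spec t t' : tower_adj U t t' ->
  B t (fst (link t t')) /\ B t' (snd (link t t')) /\ adj U (fst (link t t')) (snd (link t t')).
Proof.
  intros Htt'. unfold link. apply epsilon_spec.
  destruct (B_touch t t' Htt') as [x [y Hxy]]. now exists (x, y).
Qed.

Definition spine_spec (t : node U) (x : vertex U) (l : list (vertex U)) : Prop :=
  (forall u, In u l -> B t u) /\ In x l /\
  forall u, In u l -> clos_refl_trans _ (adj_in U (fun w => In w l)) (root t) u.

Definition spine (t : node U) (x : vertex U) : list (vertex U) :=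
  epsilon (inhabits []) (spine_spec t x).

Lemma spine_correct t x : B t x -> spine_spec t x (spine t x).
Proof.
  intros Hx. unfold spine. apply epsilon_spec, rt_adj_in_finite; [|apply root_spec].
  apply (proj2 (B_connected t)); auto using root_spec.
Qed.

(* A request (i, x) asks for branch set i to reach the vertex x of
   B (firstn i q) along a spine. Stage q opens branch set |q| at the root of
   B q and, for each i < |q|, joins branch sets i and |q| by the link edge
   between B (firstn i q) and B q. *)
Definition requests (q : node U) : list (nat * vertex U) :=
  (length q, root q) ::
  flat_map (fun i => [(i, fst (link (firstn i q) q)); (length q, snd (link (firstn i q) q))])
    (seq 0 (length q)).

Definition stage (q : node U) : list (nat * vertex U) :=
  flat_map (fun r => map (pair (fst r)) (spine (firstn (fst r) q) (snd r))) (requests q).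

Definition realize (s : node U) : node U :=
  map (fun j => stage (firstn j s)) (seq 0 (S (length s))).

Lemma tower_adj_firstn s i j :
  tower U s -> i < j -> j <= length s -> tower_adj U (firstn i s) (firstn j s).
Proof.
  intros Hs Hij Hj. split; [|split; [|split]].
  - now apply tower_firstn.
  - now apply tower_firstn.
  - intros E. apply (f_equal (@length _)) in E. rewrite !firstn_length_le in E; lia.
  - left. rewrite <- (firstn_firstn_le s i j) by lia. apply prefix_firstn.
Qed.

Lemma In_stage q i u :
  In (i, u) (stage q) <-> exists x, In (i, x) (requests q) /\ In u (spine (firstn i q) x).
Proof.
  unfold stage. rewrite in_flat_map. split.
  - intros [[i' x] [Hr Hu]]. apply in_map_iff in Hu as [w [E Hw]].
    injection E as -> ->. now exists x.
  - intros [x [Hr Hu]]. exists (i, x). split; [exact Hr|]. apply in_map_iff. now exists u.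
Qed.

Lemma requests_spec q i x :
  tower U q -> In (i, x) (requests q) -> i <= length q /\ B (firstn i q) x.
Proof.
  intros Hq [E|Hr].
  - injection E as <- <-. rewrite firstn_all. auto using root_spec.
  - apply in_flat_map in Hr as [k [Hk Hr]]. apply in_seq in Hk.
    pose proof (link_spec _ _ (tower_adj_firstn q k (length q) Hq ltac:(lia) (le_n _)))
      as [Hfst [Hsnd _]].
    rewrite firstn_all in Hfst, Hsnd.
    destruct Hr as [E|[E|[]]]; injection E as <- <-; rewrite ?firstn_all; split; auto; lia.
Qed.

Lemma request_in_stage q i x : tower U q -> In (i, x) (requests q) -> In (i, x) (stage q).
Proof.
  intros Hq Hr. apply In_stage. exists x. split; [exact Hr|].
  apply spine_correct, (requests_spec q i x Hq Hr).
Qed.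

Lemma length_realize s : length (realize s) = S (length s).
Proof. unfold realize. now rewrite length_map, length_seq. Qed.

Lemma branch_realize s i u :
  branch U i (realize s) u <-> exists j, j <= length s /\ In (i, u) (stage (firstn j s)).
Proof.
  unfold branch, realize. split.
  - intros [st [Hst Hu]]. apply in_map_iff in Hst as [j [<- Hj]]. apply in_seq in Hj.
    exists j. split; [lia|exact Hu].
  - intros [j [Hj Hu]]. exists (stage (firstn j s)). split; [|exact Hu].
    apply in_map_iff. exists j. split; [reflexivity|]. apply in_seq. lia.
Qed.

Lemma branch_realize_spec s i u : tower U s -> branch U i (realize s) u ->
  i <= length s /\ B (firstn i s) u /\
  clos_refl_trans _ (adj_in U (branch U i (realize s))) (root (firstn i s)) u.
Proof.
  intros Hs Hu. apply branch_realize in Hu as [j [Hj Hu]].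
  apply In_stage in Hu as [x [Hr Hu]].
  assert (Hsj : tower U (firstn j s)) by (now apply tower_firstn).
  destruct (requests_spec _ _ _ Hsj Hr) as [Hij Hx].
  rewrite firstn_length_le in Hij by exact Hj.
  rewrite firstn_firstn_le in Hx, Hu by exact Hij.
  destruct (spine_correct _ _ Hx) as [HB [_ Hconn]].
  split; [lia|split; [auto|]].
  apply rt_adj_in_mono with (P := fun w => In w (spine (firstn i s) x)); [|auto].
  intros w Hw. apply branch_realize. exists j. split; [exact Hj|].
  apply In_stage. exists x. rewrite firstn_firstn_le by exact Hij. auto.
Qed.

Lemma touch_realize s i j : tower U s -> i < j -> j <= length s ->
  exists x y, branch U i (realize s) x /\ branch U j (realize s) y /\ adj U x y.
Proof.
  intros Hs Hij Hj.
  set (q := firstn j s).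
  assert (Hq : tower U q) by (now apply tower_firstn).
  assert (Hlen : length q = j) by (apply firstn_length_le; exact Hj).
  assert (Hqi : firstn i q = firstn i s) by (apply firstn_firstn_le; lia).
  assert (Hreq : forall r,
             In r [(i, fst (link (firstn i s) q)); (j, snd (link (firstn i s) q))] ->
             In r (requests q)).
  { intros r Hr. right. apply in_flat_map. exists i.
    rewrite Hlen, Hqi. split; [apply in_seq; lia|exact Hr]. }
  destruct (link_spec _ _ (tower_adj_firstn s i j Hs Hij Hj)) as [_ [_ Hadj]].
  exists (fst (link (firstn i s) q)), (snd (link (firstn i s) q)).
  split; [|split; [|exact Hadj]]; apply branch_realize; exists j; split; auto;
    apply request_in_stage, Hreq; simpl; auto.
Qed.

Lemma clique_model_realize s : tower U s -> clique_model U (realize s).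
Proof.
  intros Hs. split; rewrite length_realize.
  - intros i Hi. exists (root (firstn i s)). apply branch_realize. exists i. split; [lia|].
    apply request_in_stage; [now apply tower_firstn|].
    left. now rewrite firstn_length_le by lia.
  - intros i u v _ Hu Hv.
    destruct (branch_realize_spec s i u Hs Hu) as [_ [_ Hru]].
    destruct (branch_realize_spec s i v Hs Hv) as [_ [_ Hrv]].
    eapply rt_trans; [apply rt_adj_in_sym, Hru|exact Hrv].
  - intros i j u Hi Hj Hij Hu Hv.
    destruct (branch_realize_spec s i u Hs Hu) as [_ [Hiu _]].
    destruct (branch_realize_spec s j u Hs Hv) as [_ [Hju _]].
    apply (B_disjoint (firstn i s) (firstn j s) u); auto.
    intros E. apply (f_equal (@length _)) in E. rewrite !firstn_length_le in E; lia.
  - intros i j Hi Hj Hij. destruct (Nat.lt_gt_cases i j) as [[Hlt|Hgt] _]; [exact Hij| |].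
    + apply touch_realize; auto. lia.
    + destruct (touch_realize s j i Hs Hgt ltac:(lia)) as [x [y [Hx [Hy Hxy]]]].
      exists y, x. auto using adj_sym.
Qed.

Lemma realize_prefix s t : prefix s t -> prefix (realize s) (realize t).
Proof.
  intros [r ->]. unfold realize. rewrite length_app.
  replace (S (length s + length r)) with (S (length s) + length r) by lia.
  rewrite seq_app, map_app. eexists. f_equal.
  apply map_ext_in. intros j Hj. apply in_seq in Hj.
  rewrite firstn_app. replace (j - length s) with 0 by lia. now rewrite firstn_0, app_nil_r.
Qed.

Lemma tower_realize s : tower U s -> tower U (realize s).
Proof.
  intros Hs p Hp. destruct p as [|st p]; [apply clique_model_nil|].
  assert (Hk : length p <= length s).
  { apply prefix_length in Hp. rewrite length_realize in Hp. simpl in Hp. lia. }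
  replace (st :: p) with (realize (firstn (length p) s)).
  - now apply clique_model_realize, tower_firstn.
  - apply comparable_length_eq.
    + apply (prefix_comparable _ _ (realize s)); [apply realize_prefix, prefix_firstn|exact Hp].
    + rewrite length_realize, firstn_length_le by exact Hk. reflexivity.
Qed.

Lemma Kinf_minor_of_realize : minor K_inf U.
Proof.
  set (c := fun n => Nat.iter n realize []).
  assert (Hstep : forall n, c (S n) = realize (c n)) by reflexivity.
  assert (Hlen : forall n, length (c n) = n).
  { induction n as [|n IH]; [reflexivity|]. now rewrite Hstep, length_realize, IH. }
  assert (Hnext : forall n, prefix (c n) (c (S n))).
  { induction n as [|n IH]; [apply prefix_nil|]. rewrite !Hstep in *. now apply realize_prefix. }
  apply (Kinf_minor_of_comparable_models U c).
  - intros n. apply tower_clique_model.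
    induction n as [|n IH]; [apply tower_nil|]. rewrite Hstep. now apply tower_realize.
  - intros n m. destruct (Nat.le_ge_cases n m) as [Hnm|Hmn]; [left|right];
      [induction Hnm|induction Hmn]; eauto using prefix_refl, prefix_trans.
  - intros k. exists k. now rewrite Hlen.
Qed.

End Realize.

Lemma model_graph_minor_Kinf (U : graph) : minor (model_graph U) U -> minor K_inf U.
Proof.
  intros [B [Hconn [Hdisj Htouch]]]. exact (Kinf_minor_of_realize U B Hconn Hdisj Htouch).
Qed.

Theorem theorem1p3 :
  ~ exists U : graph,
      countable U /\ Kinf_minor_free U /\
      forall G : graph, countable G -> Kinf_minor_free G -> minor G U.
Proof.
  intros [U [HU [Hfree Huniv]]].
  apply Hfree, model_graph_minor_Kinf, Huniv.
  - now apply model_graph_countable.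
  - now apply model_graph_Kinf_free.
Qed.
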